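(* Let $\mathcal{V}$ be a finite vocabulary with $|\mathcal{V}|=N$, let $\varepsilon>0$, and let $L_1,\dots,L_m$ be lists, each containing every word of $\mathcal{V}$ exactly once; let $\Phi^l:\mathcal{V}\to\{0,\dots,N-1\}$ be the bijection giving the index of a word in $L_l$, and $d^l_{\mathcal{V}}(w,w')=|\Phi^l(w)-\Phi^l(w')|$. Put $d_{\max}(w,w')=\max_{1\le l\le m} d^l_{\mathcal{V}}(w,w')$. Define the word-level randomized mechanism $\mathcal{M}:\mathcal{V}\to\mathcal{V}$ as follows: on input $w$, for each $l$ independently draw $X_l$ from the two-sided geometric distribution with $\mathbb{P}[X_l=x]=\frac{e^{\varepsilon}-1}{e^{\varepsilon}+1}e^{-\varepsilon|x|}$ ($x\in\mathbb{Z}$), set $w'_l=(\Phi^l)^{-1}(t(\Phi^l(w)+X_l))$ where $t$ clamps an integer to $\{0,\dots,N-1\}$ (values below $0$ become $0$, values above $N-1$ become $N-1$), and output one of $w'_1,\dots,w'_m$ chosen uniformly at random. Extend $\mathcal{M}$ to sentences $s=w_1\cdots w_n\in\mathcal{V}^n$ by applying it independently to each word, so that $\mathbb{P}[\mathcal{M}(s)=z_1\cdots z_n]=\prod_{i=1}^n\mathbb{P}[\mathcal{M}(w_i)=z_i]$, and for $s=w_1\cdots w_n$, $s'=w'_1\cdots w'_n$ define $\mathcal{D}(s,s')=\sum_{i=1}^n d_{\max}(w_i,w'_i)$. Then for all $n$, all $s,s',z\in\mathcal{V}^n$, $$\frac{\mathbb{P}[\mathcal{M}(s)=z]}{\mathbb{P}[\mathcal{M}(s')=z]}\le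 \exp\big(\varepsilon\,\mathcal{D}(s,s')\big).$$
   Context: Sentences are finite sequences (concatenations) of words from $\mathcal{V}$; $\mathcal{V}^n$ denotes sentences of length $n$. *)

From HB Require Import structures.
From mathcomp Require Import all_boot all_order all_algebra.
From mathcomp Require Import all_classical all_reals all_analysis.
Set Implicit Arguments. Unset Strict Implicit. Unset Printing Implicit Defensive.
Import Order.TTheory GRing.Theory Num.Theory.
Local Open Scope ring_scope.

Section Mech.
Variables (R : realType) (V : finType) (N m : nat) (eps : R).
Variable Phi : 'I_m -> V -> 'I_N.

Definition geom_pmf (x : int) : R :=
  (expR eps - 1) / (expR eps + 1) * expR (- eps * (`|x|%:R)).

(* P[X in E] = sum over x in Z of [x in E] P[X = x]  (series over Z,
   enumerated as 0, -1, 1, -2, 2, ...) *)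
Definition prob_geom (E : int -> bool) : R :=
  limn (fun n => \sum_(0 <= k < n)
     ((E (k%:Z) : nat)%:R * geom_pmf (k%:Z) +
      (E (- (k%:Z) - 1) : nat)%:R * geom_pmf (- (k%:Z) - 1))).

Definition clamp (k : int) : nat :=
  if (k < 0)%R then 0%N else minn `|k|%N N.-1.

Definition Phi_inv (l : 'I_m) (j : nat) : option V :=
  [pick v | (Phi l v : nat) == j].

Definition mech_word (w z : V) : R :=
  (m%:R)^-1 * \sum_(l < m)
     prob_geom (fun x => Phi_inv l (clamp ((Phi l w : nat)%:Z + x)) == Some z).

Definition mech_sent (n : nat) (s z : n.-tuple V) : R :=
  \prod_(i < n) mech_word (tnth s i) (tnth z i).

Definition d_max (w w' : V) : nat :=
  \max_(l < m) `|(Phi l w : nat)%:Z - (Phi l w' : nat)%:Z|%N.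

Definition D_sent (n : nat) (s s' : n.-tuple V) : nat :=
  \sum_(i < n) d_max (tnth s i) (tnth s' i).

End Mech.

From HB Require Import structures.
From mathcomp Require Import all_boot all_order all_algebra.
From mathcomp Require Import all_classical all_reals all_analysis.
From mathcomp Require Import zify ring lra.
Set Implicit Arguments.
Unset Strict Implicit.
Unset Printing Implicit Defensive.
Import numFieldNormedType.Exports.
Import Order.TTheory GRing.Theory Num.Theory.
Local Open Scope ring_scope.

(* The two-sided geometric density satisfies p(x) <= e^(eps |c|) p(x + c) by the
   triangle inequality, so moving the centre of the noise from
   Phi^l(w') to Phi^l(w) inflates the probability of any event by at most
   e^(eps |Phi^l(w) - Phi^l(w')|) <= e^(eps d_max(w, w')).  Averaging over the
   lists and multiplying over the words of a sentence gives the bound.  Since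
   [prob_geom] is a limit of sums over the windows [-n, n), which are not
   translation invariant, a shift by c is paid for with |c| extra terms. *)

Section WindowSums.
Variable R : realType.
Implicit Types (f g : int -> R) (n : nat).

Definition window_sum f n : R := \sum_(0 <= k < n) (f k%:Z + f (- k%:Z - 1)).

Lemma window_sum0 f : window_sum f 0 = 0.
Proof. by rewrite /window_sum big_geq. Qed.

Lemma window_sumS f n :
  window_sum f n.+1 = window_sum f n + (f n%:Z + f (- n%:Z - 1)).
Proof. by rewrite /window_sum big_nat_recr. Qed.

Lemma ler_window_sum f g n : (forall x, f x <= g x) ->
  window_sum f n <= window_sum g n.
Proof. by move=> fg; apply: ler_sum => k _; apply: lerD. Qed.

Lemma window_sumZ (K : R) f n :
  window_sum (fun x => K * f x) n = K * window_sum f n.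
Proof. by rewrite /window_sum mulr_sumr; apply: eq_bigr => k _; rewrite mulrDr. Qed.

Section Nonneg.
Variable f : int -> R.
Hypothesis f_ge0 : forall x, 0 <= f x.

Lemma window_sum_nondecreasing : nondecreasing_seq (window_sum f).
Proof.
move=> n p le_np; rewrite /window_sum (big_cat_nat (leq0n n) le_np) /= lerDl.
by apply: sumr_ge0 => k _; apply: addr_ge0.
Qed.

Lemma window_sum_ge0 n : 0 <= window_sum f n.
Proof. by rewrite -(window_sum0 f); exact: window_sum_nondecreasing. Qed.

Lemma window_sum_succ_shift n :
  window_sum (fun x => f (x + 1)) n + f (- n%:Z) = window_sum f n + f n%:Z.
Proof.
elim: n => [|n IH]; first by rewrite !window_sum0.
rewrite !window_sumS.
have -> : - n%:Z - 1 + 1 = - n%:Z by ring.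
have -> : - n.+1%:Z = - n%:Z - 1 by lia.
have -> : n%:Z + 1 = n.+1%:Z by lia.
lra.
Qed.

Lemma window_sum_pred_shift n :
  window_sum (fun x => f (x - 1)) n + f (n%:Z - 1) = window_sum f n + f (- n%:Z - 1).
Proof.
elim: n => [|n IH]; first by rewrite !window_sum0 oppr0.
rewrite !window_sumS.
have -> : n.+1%:Z - 1 = n%:Z by lia.
have -> : - n.+1%:Z - 1 = - n%:Z - 1 - 1 by lia.
lra.
Qed.

Lemma window_sum_succ_shift_le n :
  window_sum (fun x => f (x + 1)) n <= window_sum f n.+1.
Proof.
have := window_sum_succ_shift n; have := f_ge0 (- n%:Z); have := f_ge0 (- n%:Z - 1).
rewrite window_sumS; lra.
Qed.

Lemma window_sum_pred_shift_le n :
  window_sum (fun x => f (x - 1)) n <= window_sum f n.+1.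
Proof.
have := window_sum_pred_shift n; have := f_ge0 (n%:Z - 1); have := f_ge0 n%:Z.
rewrite window_sumS; lra.
Qed.

End Nonneg.

Lemma window_sum_shift_le f (c : int) n : (forall x, 0 <= f x) ->
  window_sum (fun x => f (x + c)) n <= window_sum f (n + `|c|)%N.
Proof.
have iter_shift (s : int) :
    (forall f, (forall x, 0 <= f x) -> forall n,
       window_sum (fun x => f (x + s)) n <= window_sum f n.+1) ->
    forall k f n, (forall x, 0 <= f x) ->
       window_sum (fun x => f (x + s * k%:Z)) n <= window_sum f (n + k).
  move=> shift1 k; elim: k => [|k IH] {}f {}n f_ge0.
    by rewrite addn0; under eq_fun do rewrite mulr0 addr0.
  have -> : (fun x => f (x + s * k.+1%:Z)) = (fun x => f ((x + s * k%:Z) + s)).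
    by apply: funext => x; congr f; lia.
  apply: (le_trans (IH (fun y => f (y + s)) n _)) => [x|]; first exact: f_ge0.
  by rewrite addnS; apply: shift1.
move=> f_ge0; have [c_ge0|c_lt0] := leP 0 c.
  have := iter_shift 1 window_sum_succ_shift_le `|c|%N f n f_ge0.
  by have -> : 1 * `|c|%N%:Z = c by lia.
have := iter_shift (-1) window_sum_pred_shift_le `|c|%N f n f_ge0.
by have -> : -1 * `|c|%N%:Z = c by lia.
Qed.

Lemma limn_window_sum_shift_le f g (K : R) (c : int) :
  (forall x, 0 <= g x) -> cvgn (window_sum f) -> cvgn (window_sum g) ->
  0 <= K -> (forall x, f x <= K * g (x + c)) ->
  limn (window_sum f) <= K * limn (window_sum g).
Proof.
move=> g_ge0 cvg_f cvg_g K_ge0 fg; apply: limr_le => //; apply: nearW => n.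
apply: (le_trans (ler_window_sum n fg)); rewrite window_sumZ ler_wpM2l //.
apply: (le_trans (window_sum_shift_le c n g_ge0)).
exact: nondecreasing_cvgn_le (window_sum_nondecreasing g_ge0) cvg_g _.
Qed.

End WindowSums.

Section GeometricNoise.
Variables (R : realType) (eps : R).
Implicit Types (E : int -> bool) (x c : int).

Local Notation p := (geom_pmf eps).

Lemma geom_pmfE x :
  p x = (expR eps - 1) / (expR eps + 1) * expR (- eps) ^+ `|x|%N.
Proof. by rewrite /geom_pmf -expRM_natr. Qed.

Lemma window_sum_geom_pmf n : window_sum p n = 1 - expR (- eps) ^+ n.
Proof.
elim: n => [|n IH]; first by rewrite window_sum0 expr0 subrr.
rewrite window_sumS IH !geom_pmfE.
have -> : `|- n%:Z - 1|%N = n.+1 by lia.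
rewrite exprS expRN; have e_gt0 := expR_gt0 eps; field.
by rewrite gt_eqF // gt_eqF // addr_gt0.
Qed.

Hypothesis eps_ge0 : 0 <= eps.

Lemma geom_pmf_scale_ge0 : 0 <= (expR eps - 1) / (expR eps + 1).
Proof.
apply: divr_ge0; last by rewrite addr_ge0 ?expR_ge0.
by rewrite subr_ge0 -expR0 ler_expR.
Qed.

Lemma geom_pmf_ge0 x : 0 <= p x.
Proof. exact: mulr_ge0 geom_pmf_scale_ge0 (expR_ge0 _). Qed.

Lemma geom_pmf_le_shift x c (d : nat) : (`|c| <= d)%N ->
  p x <= expR (eps * d%:R) * p (x + c).
Proof.
move=> le_cd; rewrite /geom_pmf mulrCA; apply: ler_wpM2l; first exact: geom_pmf_scale_ge0.
rewrite -expRD ler_expR.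
have tri : (absz (x + c))%:R <= (absz x)%:R + d%:R :> R by rewrite -natrD ler_nat; lia.
have := ler_wpM2l eps_ge0 tri; lra.
Qed.

Local Notation mass E := (fun x : int => (E x : nat)%:R * geom_pmf eps x).

Lemma prob_geomE E : prob_geom eps E = limn (window_sum (mass E)).
Proof. by []. Qed.

Lemma mass_ge0 E x : 0 <= mass E x.
Proof. exact: mulr_ge0 (ler0n _ _) (geom_pmf_ge0 x). Qed.

Lemma mass_le_geom_pmf E x : mass E x <= p x.
Proof. by rewrite /=; case: (E x); rewrite /= ?mul1r ?mul0r ?geom_pmf_ge0. Qed.

Lemma cvgn_window_sum_mass E : cvgn (window_sum (mass E)).
Proof.
apply: nondecreasing_is_cvgn; first exact: window_sum_nondecreasing (mass_ge0 E).
exists 1 => _ [n _ <-]; apply: le_trans (ler_window_sum n (mass_le_geom_pmf E)) _.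
by rewrite window_sum_geom_pmf gerDl oppr_le0 exprn_ge0 ?expR_ge0.
Qed.

Lemma prob_geom_ge0 E : 0 <= prob_geom eps E.
Proof.
rewrite prob_geomE; apply: le_trans (window_sum_ge0 (mass_ge0 E) 0) _.
exact: nondecreasing_cvgn_le (window_sum_nondecreasing (mass_ge0 E)) (@cvgn_window_sum_mass E) 0.
Qed.

Lemma prob_geom_translate_le E a a' (d : nat) : (`|a - a'| <= d)%N ->
  prob_geom eps (fun x => E (a + x)) <=
    expR (eps * d%:R) * prob_geom eps (fun x => E (a' + x)).
Proof.
move=> le_d; rewrite !prob_geomE.
apply: (@limn_window_sum_shift_le _ _ _ _ (a - a')).
- exact: mass_ge0.
- exact: (@cvgn_window_sum_mass (fun x => E (a + x))).
- exact: (@cvgn_window_sum_mass (fun x => E (a' + x))).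
- exact: expR_ge0.
move=> x; rewrite [leRHS]mulrCA; have -> : a' + (x + (a - a')) = a + x by ring.
by apply: ler_wpM2l; [exact: ler0n | exact: geom_pmf_le_shift].
Qed.

End GeometricNoise.

Section Mechanism.
Variables (R : realType) (V : finType) (N m : nat) (eps : R).
Variable Phi : 'I_m -> V -> 'I_N.
Hypothesis eps_ge0 : 0 <= eps.

Lemma mech_word_ge0 w z : 0 <= mech_word eps Phi w z.
Proof.
apply: mulr_ge0; first by rewrite invr_ge0 ler0n.
by apply: sumr_ge0 => l _; exact: prob_geom_ge0.
Qed.

Lemma mech_word_le w w' z :
  mech_word eps Phi w z <= expR (eps * (d_max Phi w w')%:R) * mech_word eps Phi w' z.
Proof.
rewrite /mech_word mulrCA ler_wpM2l ?invr_ge0 ?ler0n // mulr_sumr.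
apply: ler_sum => l _.
apply: (prob_geom_translate_le eps_ge0 (fun y => Phi_inv Phi l (clamp N y) == Some z)).
exact: (@leq_bigmax _ (fun l => `|(Phi l w : nat)%:Z - (Phi l w' : nat)%:Z|%N) l).
Qed.

Lemma mech_sent_ge0 n (s z : n.-tuple V) : 0 <= mech_sent eps Phi s z.
Proof. by apply: prodr_ge0 => i _; exact: mech_word_ge0. Qed.

Lemma mech_sent_le n (s s' z : n.-tuple V) :
  mech_sent eps Phi s z <= expR (eps * (D_sent Phi s s')%:R) * mech_sent eps Phi s' z.
Proof.
rewrite /mech_sent /D_sent natr_sum mulr_sumr expR_sum -big_split /=.
apply: ler_prod => i _; rewrite mech_word_ge0 /=; exact: mech_word_le.
Qed.

End Mechanism.

(* Also covers [b = 0], where [a / b = 0] in Rocq. *)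
Lemma ler_pdivrMr_weak (F : numFieldType) (a b K : F) :
  0 <= b -> 0 <= K -> a <= K * b -> a / b <= K.
Proof.
rewrite le_eqVlt => /predU1P[<- | b_gt0] K_ge0 le_ab; first by rewrite invr0 mulr0.
by rewrite ler_pdivrMr.
Qed.

Theorem theorem3p2 (R : realType) (V : finType) (N m : nat) (eps : R)
  (Phi : 'I_m -> V -> 'I_N) :
  #|V| = N -> 0 < eps -> (0 < m)%N -> (forall l, bijective (Phi l)) ->
  forall (n : nat) (s s' z : n.-tuple V),
    mech_sent eps Phi s z / mech_sent eps Phi s' z
      <= expR (eps * (D_sent Phi s s')%:R).
Proof.
move=> _ /ltW eps_ge0 _ _ n s s' z.
apply: ler_pdivrMr_weak; [exact: mech_sent_ge0 | exact: expR_ge0 | exact: mech_sent_le].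
Qed.
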